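(* Let $G$ be a finite simple graph of order $p$ and size $q$ with $p\geq 4$ and $q\geq p+1$. Then $G$ contains either a cycle of even length or two edge-disjoint cycles of odd length. *)

(* A finite simple graph = finType T with a symmetric,
   irreflexive boolean adjacency relation e. *)
From mathcomp Require Import all_boot.
Set Implicit Arguments. Unset Strict Implicit. Unset Printing Implicit Defensive.

Section Graphs.
Variable T : finType.

Definition edge_set (e : rel T) : {set {set T}} :=
  [set E : {set T} | [exists x, exists y, e x y && (E == [set x; y])]].

Definition graph_size (e : rel T) : nat := #|edge_set e|.

Definition is_cycle (e : rel T) (s : seq T) : bool :=
  [&& uniq s, 2 < size s & cycle e s].

Definition cycle_length (s : seq T) : nat := size s.

Definition cycle_edges (s : seq T) : {set {set T}} :=
  [set [set x; next s x] | x in s].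

End Graphs.

From mathcomp Require Import all_boot zify.
From Stdlib Require Import Classical_Prop.

Set Implicit Arguments.
Unset Strict Implicit.
Unset Printing Implicit Defensive.

(* Suppose G has neither an even cycle nor two edge-disjoint odd cycles; we show
   by induction on |V| that every induced subgraph G[V] has at most |V| edges.
   A vertex of degree at most 1 in G[V] can be deleted. Otherwise take a longest
   path v_0 ... v_k in G[V]: all neighbours of its ends lie on it, so v_0 has a
   chord v_0 v_i with i >= 2 and v_k a chord v_k v_j with j <= k - 2. Two chords
   v_0 v_i, v_0 v_l would give three cycles of total length 2l + 4, one of them
   even. If i < k, then either i <= j and the cycles v_0 ... v_i and v_j ... v_k
   share at most one vertex, or j < i and together with v_0 ... v_j v_k ... v_i
   they have total length 2k + 4. Hence i = k and the path closes into a cycle C;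
   the same argument at every rotation of C shows that no other edge of G[V]
   meets C, and deleting C removes |C| vertices and at most |C| edges. *)

Section Segments.
Variable T : Type.
Implicit Types P s : seq T.

Definition segment P a b := drop a (take b.+1 P).

Lemma size_segment P a b : b < size P -> size (segment P a b) = b.+1 - a.
Proof. by move=> ltbP; rewrite size_drop size_takel. Qed.

Lemma nth_segment x0 P a b n :
  b < size P -> a + n <= b -> nth x0 (segment P a b) n = nth x0 P (a + n).
Proof. by move=> ltbP le_anb; rewrite nth_drop nth_take. Qed.

Lemma head_segment y x0 P a b :
  a <= b -> b < size P -> head y (segment P a b) = nth x0 P a.
Proof.
move=> leab ltbP; rewrite -nth0 nth_segment ?addn0 //.
by apply: set_nth_default; lia.
Qed.

Lemma last_segment y x0 P a b :
  a <= b -> b < size P -> last y (segment P a b) = nth x0 P b.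
Proof.
move=> leab ltbP; rewrite -nth_last size_segment // nth_segment //; last lia.
by rewrite (set_nth_default x0); [congr nth | ]; lia.
Qed.

Lemma head_rev x0 s : head x0 (rev s) = last x0 s.
Proof. by case/lastP: s => // s y; rewrite rev_rcons last_rcons. Qed.

Lemma last_rev x0 s : last x0 (rev s) = head x0 s.
Proof. by case: s => //= y s; rewrite rev_cons last_rcons. Qed.

Lemma sorted_segment (e : rel T) P a b : sorted e P -> sorted e (segment P a b).
Proof. by move=> sP; apply/drop_sorted/take_sorted. Qed.

Lemma sorted_cat_link (e : rel T) x0 s1 s2 :
  sorted e s1 -> sorted e s2 -> e (last x0 s1) (head x0 s2) -> sorted e (s1 ++ s2).
Proof.
case: s1 => [|y s1] //= s1P; case: s2 => [|z s2] //=; first by rewrite cats0.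
by move=> s2P link; rewrite cat_path s1P /= link.
Qed.

End Segments.

Lemma uniq_segment (T : eqType) (P : seq T) a b : uniq P -> uniq (segment P a b).
Proof. by move=> uP; apply/drop_uniq/take_uniq. Qed.

Lemma mem_segment (T : eqType) (P : seq T) a b z :
  uniq P -> b < size P -> z \in segment P a b ->
  [/\ z \in P, a <= index z P & index z P <= b].
Proof.
move=> uP ltbP /(nthP z) [n]; rewrite size_segment // => ltn.
rewrite nth_segment //; last lia.
move=> <-; have ltP : a + n < size P by lia.
by rewrite index_uniq // mem_nth //; split=> //; lia.
Qed.

Section Cycles.
Variables (T : finType) (e : rel T).
Hypothesis e_sym : symmetric e.
Implicit Types P s : seq T.

Lemma is_cycle_sorted x0 s :
  uniq s -> 2 < size s -> sorted e s -> e (last x0 s) (head x0 s) -> is_cycle e s.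
Proof.
case: s => [|y s] // us lt2s /= sP link.
by rewrite /is_cycle us lt2s /= rcons_path sP.
Qed.

Lemma sorted_rev s : sorted e (rev s) = sorted e s.
Proof. by rewrite rev_sorted; apply: eq_sorted => x y; rewrite e_sym. Qed.

Lemma segment_cycle x0 P a b :
  sorted e P -> uniq P -> a.+1 < b -> b < size P ->
  e (nth x0 P b) (nth x0 P a) -> is_cycle e (segment P a b).
Proof.
move=> sP uP ltab ltbP link; apply: (@is_cycle_sorted x0).
- exact: uniq_segment.
- by rewrite size_segment //; lia.
- exact: sorted_segment.
by rewrite (last_segment _ x0) ?(head_segment _ x0) //; lia.
Qed.

End Cycles.

Section InducedEdges.
Variables (T : finType) (e : rel T).
Hypothesis e_sym : symmetric e.
Implicit Types (V W : {set T}) (P : seq T).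

Definition induced_edges V := [set E in edge_set e | E \subset V].

Definition nbhd V x := [set y in V | e x y].

Lemma edge_setP E : reflect (exists x y, e x y /\ E = [set x; y]) (E \in edge_set e).
Proof.
rewrite inE; apply: (iffP existsP) => [[x /existsP[y /andP[exy /eqP->]]]|].
  by exists x, y.
by case=> x [y [exy ->]]; exists x; apply/existsP; exists y; rewrite exy eqxx.
Qed.

Lemma induced_edges0 : induced_edges set0 = set0.
Proof.
apply/setP => E; rewrite inE in_set0; apply/negbTE/andP.
case=> /edge_setP[x [y [_ ->]]] /subsetP/(_ x).
by rewrite !inE eqxx => /(_ isT).
Qed.

Lemma card_induced_edges_setD V W (F : {set {set T}}) :
  (forall x y, x \in W -> y \in V -> e x y -> [set x; y] \in F) ->
  #|induced_edges V| <= #|induced_edges (V :\: W)| + #|F|.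
Proof.
move=> WF.
have sub : induced_edges V \subset induced_edges (V :\: W) :|: F.
  apply/subsetP => E; rewrite inE => /andP[/edge_setP[x [y [exy ->]]] /subsetP sV].
  have xV : x \in V by apply: sV; rewrite !inE eqxx.
  have yV : y \in V by apply: sV; rewrite !inE eqxx orbT.
  apply/setUP; have [xW|xW] := boolP (x \in W); first by right; apply: WF.
  have [yW|yW] := boolP (y \in W); first by right; rewrite setUC WF // e_sym.
  left; rewrite inE; apply/andP; split; first by apply/edge_setP; exists x, y.
  by apply/subsetP => z; rewrite !inE => /orP[]/eqP->; rewrite ?xV ?yV ?xW ?yW.
apply: leq_trans (subset_leq_card sub) _.
by rewrite cardsU leq_subr.
Qed.

Lemma card_induced_edges_del1 V x :
  #|induced_edges V| <= #|induced_edges (V :\ x)| + #|nbhd V x|.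
Proof.
apply: leq_trans (card_induced_edges_setD (F := [set [set x; y] | y in nbhd V x]) _) _.
  by move=> _ y /set1P-> yV exy; apply: imset_f; rewrite inE yV.
by rewrite leq_add2l leq_imset_card.
Qed.

Lemma card_induced_edges_del_cycle V P : uniq P ->
  (forall x y, x \in P -> y \in V -> e x y -> y = next P x \/ y = prev P x) ->
  #|induced_edges V| <= #|induced_edges (V :\: [set z in P])| + size P.
Proof.
move=> uP nbrP.
apply: leq_trans (card_induced_edges_setD (W := [set z in P]) (F := cycle_edges P) _) _.
  move=> x y /[!inE] xP yV /(nbrP _ _ xP yV) [->|->]; first exact: imset_f.
  by rewrite setUC -{2}(next_prev uP x); apply: imset_f; rewrite mem_prev.
by rewrite leq_add2l (leq_trans (leq_imset_card _ _)) ?card_size.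
Qed.

End InducedEdges.

Section LongestPaths.
Variables (T : finType) (e : rel T).
Hypotheses (e_sym : symmetric e) (e_irr : irreflexive e).
Implicit Types (V : {set T}) (P Q : seq T).

Definition path_in V P := [&& uniq P, all [in V] P & sorted e P].

Definition longest_path_in V P :=
  path_in V P /\ forall Q, path_in V Q -> size Q <= size P.

Lemma exists_longest_path V x : x \in V -> exists2 P, longest_path_in V P & 0 < size P.
Proof.
move=> xV; pose has_path n := [exists t : n.-tuple T, path_in V t].
have has_path1 : has_path 1 by apply/existsP; exists [tuple x]; rewrite /path_in /= xV.
have path_bound n : has_path n -> n <= #|T|.
  move=> /existsP[t /and3P[ut _ _]].
  by rewrite -(size_tuple t) -(card_uniqP ut) max_card.
have [n /existsP[t tV] maxn] := ex_maxnP (ex_intro _ 1 has_path1) path_bound.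
exists (tval t); last by rewrite size_tuple maxn.
split=> // Q QV; rewrite size_tuple; apply: maxn.
by apply/existsP; exists (in_tuple Q).
Qed.

Lemma longest_path_in_rev V P : longest_path_in V P -> longest_path_in V (rev P).
Proof.
case=> /and3P[uP PV sP] maxP; split=> [|Q /maxP]; last by rewrite size_rev.
by rewrite /path_in rev_uniq all_rev sorted_rev // uP PV sP.
Qed.

Lemma longest_path_in_rot V P n :
  cycle e P -> longest_path_in V P -> longest_path_in V (rot n P).
Proof.
move=> cP [/and3P[uP PV _] maxP]; split=> [|Q /maxP]; last by rewrite size_rot.
rewrite /path_in rot_uniq uP (eq_all_r (mem_rot n P)) PV /=.
move: cP; rewrite -(rot_cycle n); case: (rot n P) => // y s.
by rewrite (cycle_path y) => /path_sorted.
Qed.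

Lemma longest_path_head_nbr x0 V P y :
  longest_path_in V P -> y \in V -> e (nth x0 P 0) y -> y \in P.
Proof.
case=> /and3P[uP PV sP] maxP yV ey; apply/negPn/negP => yNP.
have : path_in V (y :: P).
  rewrite /path_in /= yNP uP yV PV.
  by case: P sP ey {uP PV maxP yNP} => //= z P -> ezy; rewrite e_sym ezy.
by move/maxP; rewrite ltnn.
Qed.

Lemma head_nbr_index_gt1 x0 P y :
  y \in P -> e (nth x0 P 0) y -> y != nth x0 P 1 -> 1 < index y P.
Proof.
move=> yP ey y1; rewrite ltnNge leq_eqVlt ltnS leqn0.
apply/negP => /orP[]/eqP idx; move: ey y1; rewrite -(nth_index x0 yP) idx.
  by rewrite eqxx.
by rewrite e_irr.
Qed.

Lemma longest_path_head_chord x0 V P :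
  longest_path_in V P -> 1 < #|nbhd e V (nth x0 P 0)| ->
  exists2 i, 1 < i < size P & e (nth x0 P 0) (nth x0 P i).
Proof.
move=> PV /card_gt1P[y1 [y2 [y1N y2N y1y2]]].
have [y [yV ey y1P]] : exists y, [/\ y \in V, e (nth x0 P 0) y & y != nth x0 P 1].
  move: y1N y2N; rewrite !inE => /andP[y1V e1] /andP[y2V e2].
  have [y1P|] := eqVneq y1 (nth x0 P 1); last by exists y1.
  by exists y2; rewrite -y1P eq_sym.
have yP := longest_path_head_nbr PV yV ey.
exists (index y P); last by rewrite nth_index.
by rewrite (head_nbr_index_gt1 yP ey y1P) index_mem.
Qed.

End LongestPaths.

Section NoEvenCycle.
Variables (T : finType) (e : rel T).
Hypotheses (e_sym : symmetric e) (e_irr : irreflexive e).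
Hypothesis cycle_odd : forall s, is_cycle e s -> odd (cycle_length s).
Hypothesis cycles_share_edge : forall s1 s2, is_cycle e s1 -> is_cycle e s2 ->
  ~~ [disjoint cycle_edges s1 & cycle_edges s2].
Implicit Types (V : {set T}) (P s : seq T).

Lemma three_cycles_odd_size s1 s2 s3 :
  is_cycle e s1 -> is_cycle e s2 -> is_cycle e s3 ->
  odd (size s1 + size s2 + size s3).
Proof. by move=> /cycle_odd o1 /cycle_odd o2 /cycle_odd o3; rewrite !oddD o1 o2 o3. Qed.

Lemma no_cycles_one_common_vertex s1 s2 c :
  is_cycle e s1 -> is_cycle e s2 -> (forall z, z \in s1 -> z \in s2 -> z = c) ->
  False.
Proof.
move=> C1 C2 common; apply: (negP (cycles_share_edge C1 C2)).
rewrite -setI_eq0; apply/eqP/setP => E; rewrite !inE; apply/negbTE/negP.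
case/andP=> /imsetP[x x1 ->] /imsetP[y y2 E12].
have nx1 : next s1 x \in s1 by rewrite mem_next.
have in2 z : z \in [set x; next s1 x] -> z \in s2.
  by rewrite E12 !inE => /orP[]/eqP->; rewrite ?mem_next.
have cx : x = c by apply: common x1 (in2 _ _); rewrite !inE eqxx.
have cnx : next s1 x = c by apply: common nx1 (in2 _ _); rewrite !inE eqxx orbT.
have /and3P[_ _ cyc1] := C1; have := next_cycle cyc1 x1.
by rewrite cnx {1}cx e_irr.
Qed.

Lemma no_two_head_chords x0 P i l :
  sorted e P -> uniq P -> 1 < i -> i < l -> l < size P ->
  e (nth x0 P 0) (nth x0 P i) -> e (nth x0 P 0) (nth x0 P l) -> False.
Proof.
move=> sP uP lt1i ltil ltlP ei el.
have Ci : is_cycle e (segment P 0 i).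
  by apply: (@segment_cycle _ _ x0) => //; [lia | rewrite e_sym].
have Cl : is_cycle e (segment P 0 l).
  by apply: (@segment_cycle _ _ x0) => //; [lia | rewrite e_sym].
have Cil : is_cycle e (nth x0 P 0 :: segment P i l).
  have P0 : 0 < size P by apply: leq_ltn_trans ltlP.
  apply: (@is_cycle_sorted _ _ x0).
  - rewrite /= uniq_segment // andbT; apply/negP => /(mem_segment uP ltlP)[_].
    by rewrite index_uniq //; lia.
  - by rewrite /= size_segment //; lia.
  - apply: (@sorted_cat_link _ _ x0 [:: _]); rewrite ?sorted_segment //=.
    by rewrite (head_segment _ x0) //; lia.
  by rewrite /= (last_segment _ x0) //; [rewrite e_sym | lia].
by have := three_cycles_odd_size Ci Cl Cil; rewrite /= !size_segment //; lia.
Qed.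

Lemma no_chords_at_both_ends x0 P i j (k := (size P).-1) :
  sorted e P -> uniq P -> 1 < i < k -> j.+1 < k ->
  e (nth x0 P 0) (nth x0 P i) -> e (nth x0 P k) (nth x0 P j) -> False.
Proof.
move=> sP uP /andP[lt1i ltik] ltjk ei ej.
have ltkP : k < size P by rewrite /k; lia.
have Ci : is_cycle e (segment P 0 i).
  by apply: (@segment_cycle _ _ x0) => //; [lia | rewrite e_sym].
have Cj : is_cycle e (segment P j k) by apply: (@segment_cycle _ _ x0).
have [leij|ltji] := leqP i j.
  apply: (no_cycles_one_common_vertex Ci Cj (c := nth x0 P i)) => z.
  have ltiP : i < size P by lia.
  move=> /(mem_segment uP ltiP)[zP _ zi] /(mem_segment uP ltkP)[_ jz _].
  by rewrite -(nth_index x0 zP); congr nth; lia.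
pose D := segment P 0 j ++ rev (segment P i k).
have CD : is_cycle e D.
  have ltjP : j < size P by lia.
  apply: (@is_cycle_sorted _ _ x0).
  - rewrite cat_uniq rev_uniq !uniq_segment // andbT.
    apply/hasPn => z; rewrite mem_rev => /(mem_segment uP ltkP)[_ iz _].
    by apply/negP => /(mem_segment uP ltjP)[_ _ zj]; lia.
  - by rewrite size_cat size_rev !size_segment //; lia.
  - apply: (@sorted_cat_link _ _ x0); rewrite ?sorted_rev ?sorted_segment //.
    rewrite head_rev (last_segment _ x0) ?(last_segment _ x0) //; try lia.
    by rewrite e_sym.
  rewrite last_cat last_rev (head_segment _ x0) //; last lia.
  rewrite -nth0 nth_cat size_segment // subn0 ltn0Sn nth_segment //.
  by rewrite e_sym.
have := three_cycles_odd_size Ci Cj CD.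
by rewrite size_cat size_rev !size_segment //; lia.
Qed.

Lemma longest_path_head_chord_uniq x0 V P y z :
  longest_path_in e V P -> y \in V -> z \in V ->
  e (nth x0 P 0) y -> e (nth x0 P 0) z ->
  y != nth x0 P 1 -> z != nth x0 P 1 -> y = z.
Proof.
move=> PV; have [/and3P[uP _ sP] _] := PV.
wlog le_yz : y z / index y P <= index z P.
  move=> hyp yV zV ey ez y1 z1; have [le|/ltnW le] := leqP (index y P) (index z P).
    exact: hyp.
  by symmetry; apply: hyp.
move=> yV zV ey ez y1 z1.
have yP := longest_path_head_nbr e_sym PV yV ey.
have zP := longest_path_head_nbr e_sym PV zV ez.
have [eq_yz|ne_yz] := eqVneq (index y P) (index z P).
  by rewrite -(nth_index x0 yP) -(nth_index x0 zP) eq_yz.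
have lt_yz : index y P < index z P by rewrite ltn_neqAle ne_yz le_yz.
have ltzP : index z P < size P by rewrite index_mem.
have lt1y := head_nbr_index_gt1 e_irr yP ey y1.
by exfalso; apply: (no_two_head_chords (x0 := x0) sP uP lt1y lt_yz ltzP);
  rewrite nth_index.
Qed.

Lemma longest_cycle_nbr V P :
  longest_path_in e V P -> cycle e P -> 2 < size P ->
  forall x y, x \in P -> y \in V -> e x y -> y = next P x \/ y = prev P x.
Proof.
move=> PV cP lt2P x y xP yV exy; have [/and3P[uP _ _] _] := PV.
(* Rotated to start at x, the cycle is a longest path whose unique head chord
   must be the closing edge to prev P x. *)
case: (rot_to xP) => n Q rotP.
have QV : longest_path_in e V (x :: Q) by rewrite -rotP; apply: longest_path_in_rot.
have uQ : uniq (x :: Q) by rewrite -rotP rot_uniq.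
have cQ : cycle e (x :: Q) by rewrite -rotP rot_cycle.
have ltQ : 1 < size Q by move: lt2P; rewrite -(size_rot n) rotP.
have -> : next P x = nth x Q 0.
  by rewrite -(next_rot n uP) rotP next_nth mem_head /= eqxx.
have -> : prev P x = last x Q.
  rewrite -(prev_rot n uP) rotP prev_nth mem_head /=.
  by case/andP: uQ => /memNindex-> _; rewrite (last_nth x).
have [->|y1] := eqVneq y (nth x Q 0); [by left | right].
apply: (longest_path_head_chord_uniq (x0 := x) QV) => //=.
- by case: QV => /and3P[_ /allP QV _] _; apply/QV/mem_last.
- by move: cQ; rewrite /= rcons_path => /andP[_]; rewrite e_sym.
have /andP[_ uQ'] := uQ.
by rewrite -nth_last (nth_uniq x) //; case: (size Q) ltQ => [|[]].
Qed.

Lemma min_degree2_longest_cycle V x :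
  x \in V -> {in V, forall y, 1 < #|nbhd e V y|} ->
  exists P, [/\ longest_path_in e V P, cycle e P & 2 < size P].
Proof.
move=> xV deg2; have [P PV P0] := exists_longest_path e xV.
have [/and3P[uP /allP PsubV sP] _] := PV.
have nthV i : i < size P -> nth x P i \in V by move=> ltiP; apply/PsubV/mem_nth.
have [i /andP[lt1i ltiP] ei] :=
  longest_path_head_chord e_sym e_irr PV (deg2 _ (nthV 0 P0)).
have lastV : nth x (rev P) 0 \in V by rewrite nth_rev // nthV //; lia.
have [j /andP[lt1j ltjP]] :=
  longest_path_head_chord e_sym e_irr (longest_path_in_rev e_sym PV) (deg2 _ lastV).
rewrite size_rev in ltjP; rewrite !nth_rev ?size_rev // subn1 => ej.
have [eq_ik|ne_ik] := eqVneq i (size P).-1.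
  have /and3P[_ lt2P cP] : is_cycle e P.
    apply: (@is_cycle_sorted _ _ x) => //; first lia.
    by rewrite -nth_last -nth0 -eq_ik e_sym.
  by exists P.
exfalso; apply: (no_chords_at_both_ends sP uP _ _ ei ej); lia.
Qed.

Lemma card_induced_edges_le V : #|induced_edges e V| <= #|V|.
Proof.
move: {2}#|V| (leqnn #|V|) => n; elim: n V => [|n IHn] V leVn.
  by move: leVn; rewrite leqn0 cards_eq0 => /eqP->; rewrite induced_edges0 cards0.
have [->|[x xV]] := set_0Vmem V; first by rewrite induced_edges0 cards0.
case: (pickP [pred y in V | #|nbhd e V y| <= 1]) => [y /andP[yV deg_y] | deg2].
  have := cardsD1 y V; rewrite yV => cardV.
  apply: leq_trans (card_induced_edges_del1 e_sym V y) _.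
  by have := IHn (V :\ y); lia.
have {}deg2 : {in V, forall y, 1 < #|nbhd e V y|}.
  by move=> y yV; rewrite ltnNge; apply/negP => le1; have := deg2 y; rewrite /= yV le1.
have [P [PV cP lt2P]] := min_degree2_longest_cycle xV deg2.
have [/and3P[uP /allP PsubV _] _] := PV.
have PsV : [set z in P] \subset V by apply/subsetP => z; rewrite inE; apply: PsubV.
have cardP : #|[set z in P]| = size P by rewrite cardsE; apply/card_uniqP.
have := card_induced_edges_del_cycle e_sym uP (longest_cycle_nbr PV cP lt2P).
have := subset_leq_card PsV; have := IHn (V :\: [set z in P]).
by rewrite cardsDS // cardP; lia.
Qed.

End NoEvenCycle.

Theorem corollary8p4 (T : finType) (e : rel T)
  (e_sym : symmetric e) (e_irr : irreflexive e) :
  4 <= #|T| -> #|T| + 1 <= graph_size e ->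
  (exists s : seq T, is_cycle e s /\ ~~ odd (cycle_length s)) \/
  (exists s1 s2 : seq T,
      [/\ is_cycle e s1, is_cycle e s2,
          odd (cycle_length s1), odd (cycle_length s2) &
          [disjoint cycle_edges s1 & cycle_edges s2]]).
Proof.
move=> _ ltTq; apply: NNPP => no_cycles.
have cycle_odd s : is_cycle e s -> odd (cycle_length s).
  by move=> Cs; apply/negPn/negP => even_s; apply: no_cycles; left; exists s.
have cycles_share_edge s1 s2 : is_cycle e s1 -> is_cycle e s2 ->
    ~~ [disjoint cycle_edges s1 & cycle_edges s2].
  move=> C1 C2; apply/negP => disj; apply: no_cycles; right.
  by exists s1, s2; split; rewrite ?cycle_odd.
have := card_induced_edges_le e_sym e_irr cycle_odd cycles_share_edge [set: T].
have -> : induced_edges e [set: T] = edge_set e.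
  by apply/setP => E; rewrite inE subsetT andbT.
by rewrite cardsT; move: ltTq; rewrite /graph_size; lia.
Qed.
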